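(* Let $\theta\in\Theta=\{i\pi/4\}_{0\le i\le 7}$, let $d,r\in\{0,1\}$ and set $\delta=\theta+r\pi$. Let $\rho_{\mathrm{dummy}}$ and $\rho_{\mathrm{trap}}$ be single-qubit density matrices with $F_{\mathrm{dummy}}=\langle d|\rho_{\mathrm{dummy}}|d\rangle$ and $F_{\mathrm{trap}}=\langle +_\theta|\rho_{\mathrm{trap}}|+_\theta\rangle$. Apply a controlled-$Z$ gate to the two-qubit state $\rho_{\mathrm{dummy}}\otimes\rho_{\mathrm{trap}}$ and then measure the trap (second) qubit in the basis $\{|+_\delta\rangle,|-_\delta\rangle\}$, where outcome $0$ corresponds to $|+_\delta\rangle$ and outcome $1$ to $|-_\delta\rangle$. Then the probability that the outcome differs from $d\oplus r$ is $$p_{\mathrm{fail}}=F_{\mathrm{dummy}}(1-F_{\mathrm{trap}})+F_{\mathrm{trap}}(1-F_{\mathrm{dummy}}).$$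
   Context: For $\theta\in\mathbb{R}$, $|\pm_\theta\rangle=\frac{1}{\sqrt2}(|0\rangle\pm e^{i\theta}|1\rangle)$. This models a test round of two-qubit verified blind quantum computation: the ''dummy'' qubit is intended to be $|d\rangle$ and the ''trap'' qubit is intended to be $|+_\theta\rangle$; the test round fails when the trap measurement outcome is not $d\oplus r$. *)

From HB Require Import structures.
From mathcomp Require Import all_boot all_order all_algebra.
From mathcomp Require Import complex.
From mathcomp Require Import reals trigo.
Set Implicit Arguments. Unset Strict Implicit. Unset Printing Implicit Defensive.
Import Order.TTheory GRing.Theory Num.Theory.
Local Open Scope ring_scope.
Local Open Scope complex_scope.

Section Qubits.
Variable R : realType.
Local Notation C := R[i].

Definition expi (t : R) : C := (cos t) +i* (sin t).

Definition adj m n (M : 'M[C]_(m, n)) : 'M[C]_(n, m) := (map_mx conjc M)^T.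

Definition ket (b : bool) : 'cV[C]_2 :=
  \col_(i < 2) (if (i : nat) == b then 1 else 0).

(* |+_t> (s = false) and |-_t> (s = true):  (|0> +/- e^{it}|1>)/sqrt 2 *)
Definition ket_pm (t : R) (s : bool) : 'cV[C]_2 :=
  \col_(i < 2) (((Num.sqrt (2 : R))^-1)%:C *
                (if (i : nat) == 0%N then 1 else (if s then -1 else 1) * expi t)).

Definition density_matrix (rho : 'M[C]_2) : Prop :=
  adj rho = rho /\
  (forall v : 'cV[C]_2, 0 <= (adj v *m rho *m v) 0 0) /\
  \tr rho = 1.

Definition expect (v : 'cV[C]_2) (rho : 'M[C]_2) : C := (adj v *m rho *m v) 0 0.

(* Kronecker product, basis |a b> <-> index 2a + b *)
Definition kron2 (A B : 'M[C]_2) : 'M[C]_4 :=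
  \matrix_(i < 4, j < 4)
    (A (inord (i %/ 2)) (inord (j %/ 2)) * B (inord (i %% 2)) (inord (j %% 2))).

Definition CZ : 'M[C]_4 := diag_mx (\row_(i < 4) (if (i : nat) == 3%N then -1 else 1)).

Definition proj_trap (t : R) (s : bool) : 'M[C]_4 :=
  kron2 1%:M (ket_pm t s *m adj (ket_pm t s)).

(* probability of outcome s (false = 0 = |+_t>, true = 1 = |-_t>) on state sigma *)
Definition prob_trap (t : R) (s : bool) (sigma : 'M[C]_4) : C :=
  \tr (proj_trap t s *m sigma).

End Qubits.

Arguments ket {R}.
Arguments ket_pm {R}.
Arguments expect {R}.
Arguments CZ {R}.
Arguments kron2 {R}.
Arguments adj {R m n}.
Arguments prob_trap {R}.
Arguments density_matrix {R}.
Arguments expi {R}.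
Arguments proj_trap {R}.

From HB Require Import structures.
From mathcomp Require Import all_boot all_order all_algebra.
From mathcomp Require Import complex.
From mathcomp Require Import reals trigo.
From mathcomp Require Import ring.
Import Order.TTheory GRing.Theory Num.Theory.
Local Open Scope ring_scope.
Local Open Scope complex_scope.

(* Proof idea: CZ = |0><0| (x) 1 + |1><1| (x) Z and the measurement only acts on the trap,
   so the outcome probability is the average, weighted by the dummy's populations
   <0|rho_dummy|0> and <1|rho_dummy|1>, of measuring rho_trap and Z rho_trap Z.  Conjugating
   by Z amounts to swapping |+_t> and |-_t>, and so does the shift delta = theta + r pi when
   r = 1.  Completeness of the bases {|0>,|1>} and {|+_t>,|-_t>} together with trace one then
   turns the two complementary expectations into 1 - F_dummy and 1 - F_trap. *)

Section TrapTest.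
Variable R : realType.
Local Notation C := R[i].

Lemma conjcM (x y : C) : conjc (x * y) = conjc x * conjc y.
Proof. exact: rmorphM. Qed.

Lemma adjM m n p (A : 'M[C]_(m, n)) (B : 'M[C]_(n, p)) : adj (A *m B) = adj B *m adj A.
Proof. by rewrite /adj map_mxM trmx_mul. Qed.

Lemma adjK m n (A : 'M[C]_(m, n)) : adj (adj A) = A.
Proof. by apply/matrixP => i j; rewrite !mxE conjcK. Qed.

Lemma adj_sign_diag n (b : 'I_n -> bool) :
  adj (diag_mx (\row_i (if b i then -1 else 1)) : 'M[C]_n) =
  diag_mx (\row_i (if b i then -1 else 1)).
Proof.
apply/matrixP => i j; rewrite !mxE.
have [->|_] := eqVneq i j; last by rewrite !mulr0n rmorph0.
by rewrite !mulr1n; case: ifP; rewrite ?rmorphN rmorph1.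
Qed.

Lemma adj_ket (b : bool) : adj (ket b : 'cV[C]_2) = (ket b)^T.
Proof. by apply/matrixP => i j; rewrite !mxE; case: ifP; rewrite ?rmorph1 ?rmorph0. Qed.

Lemma expect_trace (v : 'cV[C]_2) (rho : 'M[C]_2) : expect v rho = \tr (v *m adj v *m rho).
Proof. by rewrite -[in RHS]mulmxA [in RHS]mxtrace_mulC /mxtrace big_ord1. Qed.

Lemma expect_conj (U : 'M[C]_2) (v : 'cV[C]_2) (rho : 'M[C]_2) :
  expect v (U *m rho *m adj U) = expect (adj U *m v) rho.
Proof. by rewrite /expect adjM adjK !mulmxA. Qed.

Lemma expect_add (u v : 'cV[C]_2) (rho : 'M[C]_2) :
  expect u rho + expect v rho = \tr ((u *m adj u + v *m adj v) *m rho).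
Proof. by rewrite !expect_trace -mxtraceD -mulmxDl. Qed.

Lemma expiDpi (t : R) : expi (t + pi) = - expi t.
Proof. by rewrite /expi cosDpi sinDpi; apply/eqP; rewrite eq_complex /= !eqxx. Qed.

Lemma expi_mul_conj (t : R) : expi t * conjc (expi t) = 1.
Proof.
apply/eqP; rewrite eq_complex /= -(cos2Dsin2 t) !expr2.
by apply/andP; split; apply/eqP; ring.
Qed.

Lemma ket_pmDpi (t : R) (s : bool) : ket_pm (t + pi) s = ket_pm t (~~ s).
Proof.
apply/matrixP => i j; rewrite !mxE expiDpi.
by case: s; rewrite /= ?mulN1r ?mul1r ?opprK.
Qed.

Lemma ket_pm_shift (t : R) (r s : bool) :
  ket_pm (t + (r : nat)%:R * pi) s = ket_pm t (s (+) r).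
Proof. by case: r; rewrite ?mul1r ?ket_pmDpi ?mul0r ?addr0 ?addbT ?addbF. Qed.

Definition pauliZ : 'M[C]_2 := diag_mx (\row_(i < 2) (if (i : nat) == 1%N then -1 else 1)).

Lemma adj_pauliZ : adj pauliZ = pauliZ.
Proof. exact: adj_sign_diag. Qed.

Lemma pauliZ_ket_pm (t : R) (s : bool) : pauliZ *m ket_pm t s = ket_pm t (~~ s).
Proof.
rewrite /pauliZ mul_diag_mx; apply/matrixP => i j; rewrite !mxE.
by case: i => [[|[|//]] ?]; case: s => /=; ring.
Qed.

Lemma ket_completeness :
  ket false *m adj (ket false) + ket true *m adj (ket true) = 1%:M :> 'M[C]_2.
Proof.
rewrite !adj_ket; apply/matrixP => i j; rewrite !mxE !big_ord1 !mxE.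
by case: i => [[|[|//]] ?]; case: j => [[|[|//]] ?]; rewrite /= ?mul1r ?mul0r ?addr0 ?add0r.
Qed.

Lemma ket_pm_completeness (t : R) :
  ket_pm t false *m adj (ket_pm t false) + ket_pm t true *m adj (ket_pm t true) = 1%:M.
Proof.
set s : C := ((Num.sqrt (2 : R))^-1)%:C.
have s_sqr : s * s * 2 = 1.
  rewrite -rmorphM /= -invfM -expr2 sqr_sqrtr // rmorphV ?unitfE ?pnatr_eq0 //= rmorph_nat.
  by rewrite mulVf // pnatr_eq0.
have conj_s : conjc s = s by apply/eqP; rewrite eq_complex /= oppr0 !eqxx.
have e_unit := expi_mul_conj t.
apply/matrixP => i j; rewrite !mxE !big_ord1 !mxE.
rewrite !conjcM conj_s !(fun_if conjc) conjc1 !conjcM ?rmorphN1 ?conjc1.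
move: (expi t) e_unit => e e_unit.
by case: i => [[|[|//]] ?]; case: j => [[|[|//]] ?] /=; ring: s_sqr e_unit.
Qed.

Lemma expect_ket_true (rho : 'M[C]_2) :
  expect (ket true) rho = \tr rho - expect (ket false) rho.
Proof. by rewrite -[rho in \tr rho]mul1mx -ket_completeness -expect_add addrC addKr. Qed.

Lemma expect_ket_pm_true (t : R) (rho : 'M[C]_2) :
  expect (ket_pm t true) rho = \tr rho - expect (ket_pm t false) rho.
Proof.
by rewrite -[rho in \tr rho]mul1mx -(ket_pm_completeness t) -expect_add addrC addKr.
Qed.

Lemma trace_kron1_CZ (P A B : 'M[C]_2) :
  \tr (kron2 1%:M P *m (CZ *m kron2 A B *m adj CZ)) =
  expect (ket false) A * \tr (P *m B) +
  expect (ket true) A * \tr (P *m (pauliZ *m B *m adj pauliZ)).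
Proof.
rewrite /CZ /pauliZ !adj_sign_diag !mul_diag_mx !mul_mx_diag.
(* Reading the entries through nat indices lets the index arithmetic of kron2 compute. *)
pose a m n := A (inord m) (inord n); have eA i j : A i j = a i j by rewrite /a !inord_val.
pose b m n := B (inord m) (inord n); have eB i j : B i j = b i j by rewrite /b !inord_val.
pose p m n := P (inord m) (inord n); have eP i j : P i j = p i j by rewrite /p !inord_val.
rewrite /expect !adj_ket /kron2 /ket /mxtrace.
do 6 rewrite ?mxE ?big_ord_recr ?big_ord0 /=.
rewrite !eA !eB !eP /divn /modn /= -!val_eqE /= ?inordK //=.
ring.
Qed.

Lemma prob_trap_CZ_kron (t : R) (s : bool) (A B : 'M[C]_2) :
  prob_trap t s (CZ *m kron2 A B *m adj CZ) =
  expect (ket false) A * expect (ket_pm t s) B +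
  expect (ket true) A * expect (ket_pm t (~~ s)) B.
Proof.
rewrite /prob_trap /proj_trap trace_kron1_CZ -!expect_trace.
by rewrite expect_conj adj_pauliZ pauliZ_ket_pm.
Qed.

End TrapTest.

Theorem lemma2 (R : realType) (k : 'I_8) (d r : bool)
    (rho_dummy rho_trap : 'M[R[i]]_2) :
  density_matrix rho_dummy -> density_matrix rho_trap ->
  let theta : R := (k%:R * pi) / 4%:R in
  let delta : R := theta + (r : nat)%:R * pi in
  let F_dummy := expect (ket d) rho_dummy in
  let F_trap := expect (ket_pm theta false) rho_trap in
  let sigma := CZ *m kron2 rho_dummy rho_trap *m adj CZ in
  prob_trap delta (~~ (d (+) r)) sigma =
    F_dummy * (1 - F_trap) + F_trap * (1 - F_dummy).
Proof.
move=> [_ [_ tr_dummy]] [_ [_ tr_trap]] theta delta F_dummy F_trap sigma.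
rewrite {}/sigma prob_trap_CZ_kron {}/delta !ket_pm_shift negbK addbK -addNb addbK.
rewrite {}/F_dummy {}/F_trap; case: d.
all: by rewrite expect_ket_true expect_ket_pm_true tr_dummy tr_trap; ring.
Qed.
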